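(* Let $G$ be a topological group with identity $e$ and $\kappa$ a cardinal. If $A$ is a precompact subset of $G$ and $\mathcal{N}_e^G$ has calibre $(\kappa^+,\omega)$, then $w(A)\le\kappa$.
   Context: $\mathcal{N}_e^G$ is the family of open neighborhoods of $e$ ordered by reverse inclusion. A subset $A$ of $G$ is precompact if it is totally bounded with respect to the (left) group uniformity, i.e. for every neighborhood $U$ of $e$ there is finite $F\subseteq A$ with $A\subseteq FU$. A directed set $P$ has calibre $(\mu,\lambda)$ if every subset of $P$ of size $\mu$ contains a subset of size $\lambda$ with an upper bound in $P$. $w(A)$ is the weight (least size of a base) of $A$. *)

From HB Require Import structures.
From mathcomp Require Import all_boot all_order all_algebra.
From mathcomp Require Import all_classical all_reals all_analysis.
Set Implicit Arguments. Unset Strict Implicit. Unset Printing Implicit Defensive.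
Local Open Scope classical_set_scope.
Local Open Scope card_scope.

Definition is_topological_group (T : topologicalType)
    (mul : T -> T -> T) (inv : T -> T) (e : T) : Prop :=
  [/\ (forall x y z, mul x (mul y z) = mul (mul x y) z),
      (forall x, mul e x = x /\ mul x e = x),
      (forall x, mul (inv x) x = e /\ mul x (inv x) = e),
      continuous (fun p : T * T => mul p.1 p.2) &
      continuous inv].

Definition open_nbhds_of (T : topologicalType) (e : T) : set (set T) :=
  [set U | open U /\ U e].

(* Precompact (totally bounded for the left uniformity):
   for every neighbourhood U of e there is a finite F ⊆ A with A ⊆ F U. *)
Definition left_precompact (T : topologicalType) (mul : T -> T -> T) (e : T)
    (A : set T) : Prop :=
  forall U, nbhs e U ->
    exists F : set T, [/\ finite_set F, F `<=` A &
      A `<=` [set mul f u | f in F & u in U]].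

(* |S| = κ^+ where κ = |K| : S is of cardinality > κ and every subset of S
   of cardinality > κ has the cardinality of S (i.e. |S| is the least
   cardinal above κ). *)
Definition card_succ_size (K : Type) (T : Type) (S : set T) : Prop :=
  ~ (S #<= [set: K]) /\
  forall S', S' `<=` S -> ~ (S' #<= [set: K]) -> S #<= S'.

(* Calibre (κ^+, ω) of the directed set (N_e, ⊇): every subfamily of size κ^+
   contains a subfamily of size ω with an upper bound (a common lower set
   in N_e w.r.t. inclusion). *)
Definition nbhd_calibre_succ_omega (T : topologicalType) (e : T) (K : Type)
    : Prop :=
  forall S : set (set T), S `<=` open_nbhds_of e -> card_succ_size K S ->
    exists2 S' : set (set T), S' `<=` S /\ S' #= [set: nat] &
      exists2 W, open_nbhds_of e W & forall U, S' U -> W `<=` U.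

Definition subspace_base (T : topologicalType) (A : set T)
    (B : set (set T)) : Prop :=
  (forall b, B b -> exists2 U, open U & b = A `&` U) /\
  (forall U x, open U -> A x -> U x -> exists2 b, B b & b x /\ b `<=` U).

Definition weight_le (T : topologicalType) (A : set T) (K : Type) : Prop :=
  exists2 B : set (set T), subspace_base A B & B #<= [set: K].

From mathcomp Require Import all_boot all_order all_algebra.
From mathcomp Require Import all_classical all_reals all_analysis.
From mathcomp Require Import wochoice finmap.
Set Implicit Arguments. Unset Strict Implicit. Unset Printing Implicit Defensive.
Local Open Scope classical_set_scope.
Local Open Scope card_scope.

(* Well-order the open neighbourhoods of e and keep, greedily, those U for which no
   earlier kept V satisfies A⁻¹A ∩ V⁻¹V ⊆ U(U⁻¹U)U.  Every neighbourhood of e contains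
   A⁻¹A ∩ V⁻¹V for some kept V, so if at most κ sets are kept, the traces on A of the
   finitely many translates fV covering A form a base of size κ·ω = κ.  Otherwise κ⁺ sets
   are kept and, by the calibre, countably many of them contain a common neighbourhood W.
   Colour each pair V < U of these by the cells, in a finite cover of A by translates of
   some W' with W'⁻¹W' ⊆ W, of the two points witnessing that V is not absorbed by U:
   consecutive pairs V < U < U' never get the same colour, which forces the countable
   family to be finite.  For finite κ the calibre makes the set of open neighbourhoods of
   e finite; its least element H is an open subgroup, and the cosets of H give a base of
   size at most the number of open neighbourhoods of e. *)

Lemma wf_fixpoint (I X : Type) (R : I -> I -> Prop) (x0 : X)
    (F : I -> (I -> X) -> X) : well_founded R ->
  (forall i h1 h2, (forall j, R j i -> h1 j = h2 j) -> F i h1 = F i h2) ->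
  exists g : I -> X, forall i, g i = F i g.
Proof.
move=> wfR Fext.
pose F' i (h : forall j, R j i -> X) :=
  F i (fun j => if pselect (R j i) is left Rji then h j Rji else x0).
exists (Fix wfR (fun _ => X) F') => i; rewrite Fix_eq /F'.
  by apply: Fext => j Rji; case: pselect.
by move=> j h1 h2 h12; congr (F j _); apply: funext => k; case: pselect.
Qed.

Lemma strict_well_order_exists (X : eqType) : exists lt : X -> X -> Prop,
  well_founded lt /\ forall x y, x <> y -> lt x y \/ lt y x.
Proof.
have [R Rwo] := well_ordering_principle X.
have Rch : wo_chain R predT by move=> A _; exact: Rwo.
exists (fun x y => R x y /\ x <> y); split; last first.
  have Rtot := wo_chainW Rch.
  move=> x y xy; have /orP[Rxy|Ryx] := Rtot x y isT isT.
  - by left.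
  - by right; split=> // yx; apply: xy.
move=> a; apply: contrapT => Na.
pose NA := [pred x | `[< ~ Acc (fun x y => R x y /\ x <> y) x >]].
have [|z [[/asboolP NAz lbz] _]] := Rwo NA; first by exists a; apply/asboolP.
apply: NAz; constructor => y [Ryz yz]; apply: contrapT => NAy; apply: yz.
by apply: (wo_chain_antisymmetric Rch) => //; rewrite Ryz lbz //; exact/asboolP.
Qed.

Lemma fun_card_le T U (A : set T) (B : set U) (f : T -> U) :
  set_fun A B f -> set_inj A f -> A #<= B.
Proof.
move=> fAB finj; have [g] : $|{injfun A >-> B}| by apply/injfunPex; exists f.
exact: inj_card_le g.
Qed.

Lemma card_le_fun T U (u0 : U) (A : set T) (B : set U) :
  A #<= B -> exists2 f : T -> U, set_fun A B f & set_inj A f.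
Proof.
move/card_leP => [g].
pose f x := if pselect (x \in A) is left Ax then val (g (exist _ x Ax)) else u0.
exists f => [x Ax|x y Ax Ay]; rewrite /f.
  case: pselect => [Ax'|]; first exact: (set_mem (valP (g _))).
  by rewrite in_setE.
case: pselect => // Ax'; case: pselect => // Ay' /val_inj gxy.
by have [] := injT gxy.
Qed.

Lemma greedy_subset (X : Type) (lt : X -> X -> Prop) (P : set X)
    (R : X -> X -> Prop) : well_founded lt ->
  exists S : set X, forall U, S U <-> P U /\ forall V, S V -> lt V U -> ~ R V U.
Proof.
move=> wf_lt.
pose F U (h : set X) := P U /\ forall V, h V -> lt V U -> ~ R V U.
have [S SE] : exists S : set X, forall U, S U = F U S.
  apply: (wf_fixpoint True wf_lt) => U h1 h2 h12.
  apply: propext; split=> -[PU free]; split=> // V hV lVU; have h12V := h12 V lVU.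
    by apply: free lVU; rewrite h12V.
  by apply: free lVU; rewrite -h12V.
by exists S => U; rewrite {1}SE.
Qed.

Lemma card_succ_size_of_segments (X : choiceType) (K : Type)
    (lt : X -> X -> Prop) (S : set X) : well_founded lt ->
  (forall x y, S x -> S y -> x <> y -> lt x y \/ lt y x) ->
  ~ (S #<= [set: K]) -> (forall U, S U -> [set V | S V /\ lt V U] #<= [set: K]) ->
  card_succ_size K S.
Proof.
move=> wf_lt lt_total NSK segK; split=> // S' S'S NS'K.
have /set0P[s0 S's0] : S' != set0.
  by apply/eqP => S'0; apply: NS'K; rewrite S'0; exact: card_ge0.
pose seg U := [set V | S V /\ lt V U].
(* g U avoids the images of the predecessors of U, of which there are at most κ. *)
pose F U (g : X -> X) := xget s0 [set V | S' V /\ ~ (g @` seg U) V].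
have [g gE] : exists g, forall U, g U = F U g.
  apply: (wf_fixpoint s0 wf_lt) => U g1 g2 g12; rewrite /F.
  by rewrite (@eq_imagel _ _ (seg U) g1 g2) // => V [_ /g12].
have gP U : S U -> [set V | S' V /\ ~ (g @` seg U) V] (g U).
  move=> SU; rewrite gE; apply: xgetPex.
  apply: contrapT => NS; apply: NS'K.
  apply: (card_le_trans _ (card_le_trans (card_image_le g (seg U)) (segK U SU))).
  apply: subset_card_le => V S'V; apply: contrapT => NV; apply: NS; exists V.
  by split.
apply: (@fun_card_le _ _ _ _ g) => [U /gP[]//|U V /set_mem SU /set_mem SV gUV].
apply: contrapT => UV; have [lUV|lVU] := lt_total U V SU SV UV.
- by apply: (gP V SV).2; rewrite -gUV; exists U.
- by apply: (gP U SU).2; rewrite gUV; exists V.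
Qed.

Lemma card_succ_size_sub (X : choiceType) (K : Type) (Y : set X) :
  ~ (Y #<= [set: K]) -> exists2 S, S `<=` Y & card_succ_size K S.
Proof.
move=> NYK; have [lt [wf_lt lt_total]] := strict_well_order_exists X.
pose seg U := [set V | Y V /\ lt V U].
have [[U [YU NsegUK]]|segK] := pselect (exists U, Y U /\ ~ (seg U #<= [set: K])).
  elim/(well_founded_ind wf_lt): U YU NsegUK => U IH YU NsegUK.
  have [[V [[YV lVU] NsegVK]]|segVK] := pselect (exists V, seg U V /\ ~ (seg V #<= [set: K])).
    exact: IH lVU YV NsegVK.
  exists (seg U); first by move=> V [].
  apply: (card_succ_size_of_segments wf_lt) => // [x y [Yx _] [Yy _]|V segUV].
    exact: lt_total.
  apply: card_le_trans (subset_card_le _) (_ : seg V #<= _).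
    by move=> W [[YW _] lWV].
  by apply: contrapT => NsegVK; apply: segVK; exists V.
exists Y => //; apply: (card_succ_size_of_segments wf_lt) => // [x y Yx Yy|U YU].
  exact: lt_total.
by apply: contrapT => NsegUK; apply: segK; exists U.
Qed.

Lemma countable_setU T (A B : set T) :
  countable A -> countable B -> countable (A `|` B).
Proof.
by move=> cA cB; rewrite -bigcup2E; apply: bigcup_countable => [|[|[|i]] _].
Qed.

Lemma countably_infinite_partition (K : Type) : infinite_set [set: K] ->
  exists D : set (set K), [/\ forall d, D d -> d #= [set: nat],
    trivIset D id & \bigcup_(d in D) d = setT].
Proof.
move=> infK; have [k0 _] := infinite_setN0 infK.
pose P (D : set (set K)) := (forall d, D d -> d #= [set: nat]) /\ trivIset D id.
have [D [[Dnat Dtriv] maxD]] : exists D, P D /\ forall D', D `<` D' -> ~ P D'.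
  apply: Zorn_bigcup => F FP Ftot; split=> [d [D FD]|d1 d2 [D1 FD1 D1d1] [D2 FD2 D2d2]].
    exact: (FP D FD).1.
  have [D12|D21] := Ftot _ _ FD1 FD2.
  - exact: (FP D2 FD2).2 (D12 _ D1d1) D2d2.
  - exact: (FP D1 FD1).2 D1d1 (D21 _ D2d2).
(* The remainder of a maximal family is finite and gets absorbed into one block. *)
pose R := ~` \bigcup_(d in D) d.
have RN d x : D d -> d x -> ~ R x by move=> Dd dx; apply; exists d.
have finR : finite_set R.
  apply: contrapT => /infiniteP/(card_le_fun k0)[f fR finj].
  have rnat : range f #= [set: nat] by exact: inj_card_eq.
  have rR : range f `<=` R by move=> _ [n _ <-]; exact: fR.
  apply: (maxD (D `|` [set range f])).
    split=> [d Dd|/(_ (range f) (or_intror erefl)) Dr]; first by left.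
    exact: RN Dr (ex_intro2 _ _ 0%N I erefl) (rR _ (ex_intro2 _ _ 0%N I erefl)).
  split=> [d [/Dnat|->] //|].
  move=> d1 d2 [D1|->] [D2|->] [x [d1x d2x]] //.
  - exact: (Dtriv d1 d2 D1 D2 (ex_intro _ x (conj d1x d2x))).
  - by have [] := RN _ _ D1 d1x (rR _ d2x).
  - by have [] := RN _ _ D2 d2x (rR _ d1x).
have [d0 Dd0] : D !=set0.
  apply/set0P/eqP => D0; apply: infK; rewrite -setC0.
  by move: finR; rewrite /R D0 bigcup_set0.
pose f d := if d == d0 then d `|` R else d.
have fP d x : D d -> f d x -> d x \/ (d = d0 /\ R x).
  by rewrite /f; case: eqP => [->|_] Dd; [case=> ?; [left|right]|left].
exists (f @` D); split.
- move=> _ [d Dd <-]; rewrite /f; case: eqP => [->|_]; last exact: Dnat.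
  have /card_eqPle[d0le led0] := Dnat d0 Dd0.
  apply: eq_card_nat; first exact: countable_setU d0le (finite_set_countable finR).
  by apply/infiniteP; apply: card_le_trans led0 (subset_card_le (@subsetUl _ d0 R)).
- apply: trivIset_image => d1 d2 D1 D2 [x [/fP-/(_ D1) x1 /fP-/(_ D2) x2]].
  case: x1 x2 => [d1x|[-> Rx]] [d2x|[-> Rx']] //.
  + exact: (Dtriv d1 d2 D1 D2 (ex_intro _ x (conj d1x d2x))).
  + by have [] := RN _ _ D1 d1x Rx'.
  + by have [] := RN _ _ D2 d2x Rx.
- apply/seteqP; split=> // x _.
  have [[d Dd dx]|Rx] := pselect ((\bigcup_(d in D) d) x).
    exists (f d); first by exists d.
    by rewrite /f; case: eqP => // _; left.
  by exists (f d0); [exists d0|rewrite /f eqxx; right].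
Qed.

Lemma card_setT_prod_nat_le (K : Type) : infinite_set [set: K] ->
  [set: K * nat] #<= [set: K].
Proof.
move=> infK; have [k0 _] := infinite_setN0 infK.
have [D [Dnat Dtriv Dcover]] := countably_infinite_partition infK.
have /choice[blk blkP] : forall x, exists d, D d /\ d x.
  by move=> x; have : setT x by []; rewrite -Dcover => -[d Dd dx]; exists d.
have /choice[code codeP] : forall d, exists c : (K -> nat) * (nat -> K),
    D d -> [/\ set_inj d c.1, set_fun setT d c.2 & injective c.2].
  move=> d; have [Dd|NDd] := pselect (D d); last by exists (fun=> 0%N, fun=> k0).
  have /card_eqPle[le1 le2] := Dnat d Dd.
  have [i _ iinj] := card_le_fun 0%N le1; have [j jd jinj] := card_le_fun k0 le2.
  by exists (i, j) => _; split=> // n m; apply: jinj; exact: in_setT.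
pose enc (p : K * nat) :=
  (code (blk p.1)).2 (choice.pickle ((code (blk p.1)).1 p.1, p.2)).
apply: (@fun_card_le _ _ _ _ enc) => // -[x k] [y l] _ _ /= exy.
have [Dx xx] := blkP x; have [Dy yy] := blkP y.
have [_ jx _] := codeP _ Dx; have [iy jy jinj] := codeP _ Dy.
have bxy : blk x = blk y.
  apply: (Dtriv _ _ Dx Dy); exists (enc (x, k)).
  by split; [exact: jx|rewrite exy; exact: jy].
move: exy; rewrite /enc /= bxy => /jinj/(pcan_inj choice.pickleK)[ixy ->].
by congr (_, _); apply: iy ixy; rewrite in_setE // -bxy.
Qed.

Lemma finite_subsets (Y : choiceType) (C : set Y) :
  finite_set C -> finite_set [set D | D `<=` C].
Proof.
move=> finC; apply: (@card_le_finite _ _ _ [set` fpowerset (fset_set C)]).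
  apply: (@fun_card_le _ _ _ _ (@fset_set Y)) => [D DC|D1 D2 /set_mem D1C /set_mem D2C].
    by rewrite /= fpowersetE -fset_set_sub //; exact: sub_finite_set DC finC.
  by apply: fset_set_inj; exact: sub_finite_set finC.
exact: finite_fset.
Qed.

Lemma finite_of_ordered_colouring (X : Type) (Y : choiceType)
    (lt : X -> X -> Prop) (S : set X) (C : set Y) (col : X -> X -> Y) :
  finite_set C ->
  (forall U V, S U -> S V -> U <> V -> lt U V \/ lt V U) ->
  (forall V U, S V -> S U -> lt V U -> C (col V U)) ->
  (forall V U W, S V -> S U -> S W -> lt V U -> lt U W -> col V U <> col U W) ->
  finite_set S.
Proof.
move=> finC lt_total colC colP.
pose colours U := [set col V U | V in [set V | S V /\ lt V U]].
apply: card_le_finite (finite_subsets finC).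
apply: (@fun_card_le _ _ _ _ colours) => [U SU|U1 U2 /set_mem S1 /set_mem S2 E].
  by move=> _ [V [SV lVU] <-]; exact: colC.
apply: contrapT => U12; have [l12|l21] := lt_total _ _ S1 S2 U12.
- have : colours U2 (col U1 U2) by exists U1.
  by rewrite -E => -[V [SV lV1]]; apply: colP.
- have : colours U1 (col U2 U1) by exists U2.
  by rewrite E => -[V [SV lV2]]; apply: colP.
Qed.

Lemma card_graph_finite_le (I X K : Type) (S : set I) (F : I -> set X) :
  infinite_set [set: K] -> S #<= [set: K] -> (forall i, S i -> finite_set (F i)) ->
  [set p : I * X | S p.1 /\ F p.1 p.2] #<= [set: K].
Proof.
move=> infK SK finF; have [k0 _] := infinite_setN0 infK.
have [code _ code_inj] := card_le_fun k0 SK.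
have /choice[idx idxP] : forall i, exists idx : X -> nat, S i -> set_inj (F i) idx.
  move=> i; have [Si|NSi] := pselect (S i); last by exists (fun=> 0%N).
  by have [idx _ idx_inj] := card_le_fun 0%N (finite_set_countable (finF i Si)); exists idx.
apply: card_le_trans (card_setT_prod_nat_le infK).
apply: (@fun_card_le _ _ _ _ (fun p => (code p.1, idx p.1 p.2))) => //.
move=> [i x] [j y] /set_mem[/= Si Fix] /set_mem[/= Sj Fjy] [/code_inj ij].
by rewrite -ij ?in_setE // in Fjy * => /(idxP i Si) -> //; rewrite in_setE.
Qed.

Lemma card_succ_size_finite (K X : Type) (S : set X) :
  finite_set [set: K] -> card_succ_size K S -> finite_set S.
Proof.
move=> [m Km] [NSK minS]; apply: contrapT => infS; apply: (infS).
have [x0 _] : S !=set0 by apply/set0P/eqP => S0; apply: NSK; rewrite S0.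
have /infiniteP/(card_le_fun x0)[f fS f_inj] := infS.
have Sm : f @` `I_m.+1 `<=` S by move=> _ [i _ <-]; exact: fS.
have /card_eqPle[_ le_Sm] : f @` `I_m.+1 #= `I_m.+1.
  by apply: inj_card_eq => i j _ _; apply: f_inj; rewrite in_setE.
have NSmK : ~ (f @` `I_m.+1 #<= [set: K]).
  move=> SmK; have /card_eqPle[Km' _] := Km.
  by have := card_le_trans le_Sm (card_le_trans SmK Km'); rewrite card_le_II ltnn.
apply: card_le_finite (minS _ Sm NSmK) _.
by apply: finite_image; exact: finite_II.
Qed.

Lemma open_nbhds_card_le (T : topologicalType) (e : T) (K : Type) :
  nbhd_calibre_succ_omega e K -> finite_set [set: K] -> open_nbhds_of e #<= [set: K].
Proof.
move=> calib finK; apply: contrapT => /card_succ_size_sub[S SN Ssucc].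
have [S' [S'S S'nat] _] := calib S SN Ssucc.
apply: infinite_nat; rewrite -(eq_finite_set S'nat).
exact: sub_finite_set S'S (card_succ_size_finite finK Ssucc).
Qed.

Lemma minimal_open_nbhd (T : topologicalType) (e : T) :
  finite_set (open_nbhds_of e) ->
  exists2 H, open_nbhds_of e H & forall U, open_nbhds_of e U -> H `<=` U.
Proof.
move=> finN; have : nbhs e (\bigcap_(U in [set` fset_set (open_nbhds_of e)]) U).
  apply: filter_bigI => U; rewrite in_fset_set // => /set_mem NU.
  exact: open_nbhs_nbhs.
rewrite fset_setK // nbhsE => -[H NH HN].
by exists H => // U NU; apply: subset_trans HN _ => x /(_ U NU).
Qed.

Section TopologicalGroup.
Variables (T : topologicalType) (mul : T -> T -> T) (inv : T -> T) (e : T).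
Hypothesis G : is_topological_group mul inv e.

Lemma mulgA x y z : mul x (mul y z) = mul (mul x y) z. Proof. by case: G. Qed.
Lemma mul1g x : mul e x = x. Proof. by case: G => _ /(_ x)[]. Qed.
Lemma mulg1 x : mul x e = x. Proof. by case: G => _ /(_ x)[]. Qed.
Lemma mulVg x : mul (inv x) x = e. Proof. by case: G => _ _ /(_ x)[]. Qed.
Lemma mulgV x : mul x (inv x) = e. Proof. by case: G => _ _ /(_ x)[]. Qed.

Lemma mulKg x y : mul (inv x) (mul x y) = y.
Proof. by rewrite mulgA mulVg mul1g. Qed.

Lemma mulKVg x y : mul x (mul (inv x) y) = y.
Proof. by rewrite mulgA mulgV mul1g. Qed.

Lemma invg_unique x y : mul x y = e -> inv x = y.
Proof. by move=> xy; rewrite -[inv x]mulg1 -xy mulKg. Qed.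

Lemma invg1 : inv e = e. Proof. by apply: invg_unique; rewrite mul1g. Qed.

Lemma invMg x y : inv (mul x y) = mul (inv y) (inv x).
Proof. by apply: invg_unique; rewrite -mulgA mulKVg mulgV. Qed.

Lemma ldiv_lmul f x y : mul (inv (mul f x)) (mul f y) = mul (inv x) y.
Proof. by rewrite invMg -mulgA mulKg. Qed.

Lemma ldiv_trans x y z : mul (mul (inv x) y) (mul (inv y) z) = mul (inv x) z.
Proof. by rewrite -mulgA mulKVg. Qed.

Lemma continuous_lmul x : continuous (mul x).
Proof.
case: G => _ _ _ mul_cont _ z W /(mul_cont (x, z))[[Q R] /= [Qx Rz] QRW].
apply: filterS Rz => y Ry; apply: (QRW (x, y)); split=> //.
exact: nbhs_singleton Qx.
Qed.

Lemma open_lmul_preimage x O : open O -> open (mul x @^-1` O).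
Proof. by apply: open_comp => z _; exact: continuous_lmul. Qed.

Lemma lmul_image x V : mul x @` V = mul (inv x) @^-1` V.
Proof.
apply/seteqP; split=> [_ [v Vv <-]|z Vz]; first by rewrite /= mulKg.
by exists (mul (inv x) z); rewrite ?mulKVg.
Qed.

Lemma open_lmul_image x V : open V -> open (mul x @` V).
Proof. by rewrite lmul_image; exact: open_lmul_preimage. Qed.

Lemma open_nbhds_lmul_preimage x O :
  open O -> O x -> open_nbhds_of e (mul x @^-1` O).
Proof. by move=> oO Ox; split; [exact: open_lmul_preimage|rewrite /= mulg1]. Qed.

Lemma nbhs_mul_split W : nbhs e W ->
  exists2 U, nbhs e U & forall x y, U x -> U y -> W (mul x y).
Proof.
case: G => _ _ _ mul_cont _ We.
have /(mul_cont (e, e))[[U1 U2] /= [U1e U2e] U12W] : nbhs (mul e e) W by rewrite mul1g.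
exists (U1 `&` U2) => [|x y [U1x _] [_ U2y]]; first exact: filterI.
exact: (U12W (x, y)).
Qed.

Lemma nbhs_inv W : nbhs e W -> nbhs e (inv @^-1` W).
Proof. by case: G => _ _ _ _ inv_cont We; apply: inv_cont; rewrite invg1. Qed.

Lemma nbhs_ldiv_split W : nbhs e W ->
  exists2 U, nbhs e U & forall x y, U x -> U y -> W (mul (inv x) y).
Proof.
move=> /nbhs_mul_split[U Ue UW].
exists (U `&` inv @^-1` U) => [|x y [_ Uix] [Uy _]]; last exact: UW.
by apply: filterI => //; exact: nbhs_inv.
Qed.

Definition setmul (X Y : set T) : set T := [set mul x y | x in X & y in Y].
Definition ldiv (X Y : set T) : set T := [set mul (inv x) y | x in X & y in Y].
Definition sandwich (U : set T) : set T := setmul (setmul U (ldiv U U)) U.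

Lemma ldiv_sub_sandwich U : U e -> ldiv U U `<=` sandwich U.
Proof.
move=> Ue z Uz; exists z; last by exists e; rewrite ?mulg1.
by exists e => //; exists z; rewrite ?mul1g.
Qed.

Lemma nbhs_sandwich W : nbhs e W ->
  exists2 U, open_nbhds_of e U & sandwich U `<=` W.
Proof.
move=> We; have [W1 W1e W1W] := nbhs_mul_split We.
have [W2 W2e W2W1] := nbhs_mul_split W1e.
have [W3 W3e W3W2] := nbhs_ldiv_split W2e.
have U0e : nbhs e (W1 `&` W2 `&` W3) by do 2 apply: filterI => //.
exists (W1 `&` W2 `&` W3)°.
  by split; [exact: open_interior|exact: nbhs_singleton (nbhs_interior U0e)].
move=> _ [_ [a /interior_subset[[_ W2a] _] [_ [b /interior_subset[_ W3b]
  [c /interior_subset[_ W3c] <-]] <-]] [d /interior_subset[[W1d _] _] <-]].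
by apply: W1W W1d; apply: W2W1 W2a _; exact: W3W2.
Qed.

Lemma subspace_base_of_cofinal (A : set T) (S : set (set T)) (F : set T -> set T) :
  S `<=` open_nbhds_of e -> (forall V, S V -> A `<=` setmul (F V) V) ->
  (forall W, open_nbhds_of e W -> exists2 V, S V & ldiv A A `&` ldiv V V `<=` W) ->
  subspace_base A [set A `&` mul p.2 @` p.1 | p in [set p | S p.1 /\ F p.1 p.2]].
Proof.
move=> SN AF cofinal; split=> [_ [[V f] [SV _] <-]|O x oO Ax Ox].
  by exists (mul f @` V) => //; apply: open_lmul_image; exact: (SN V SV).1.
have [V SV VO] := cofinal _ (open_nbhds_lmul_preimage oO Ox).
have [f Ff [u Vu xE]] := AF V SV x Ax.
exists (A `&` mul f @` V); first by exists (V, f).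
split=> [|y [Ay [v Vv yE]]]; first by split=> //; exists u.
suff /VO : (ldiv A A `&` ldiv V V) (mul (inv x) y) by rewrite /= mulKVg.
split; first by exists x => //; exists y.
by rewrite -xE -yE ldiv_lmul; exists u => //; exists v.
Qed.

Lemma weight_le_of_cofinal (K : Type) (A : set T) (S : set (set T)) :
  left_precompact mul e A -> infinite_set [set: K] ->
  S `<=` open_nbhds_of e -> S #<= [set: K] ->
  (forall W, open_nbhds_of e W -> exists2 V, S V & ldiv A A `&` ldiv V V `<=` W) ->
  weight_le A K.
Proof.
move=> Apc infK SN SK cofinal.
have /choice[F FP] : forall V, exists F, S V -> finite_set F /\ A `<=` setmul F V.
  move=> V; have [SV|NSV] := pselect (S V); last by exists set0.
  have [oV Ve] := SN V SV.
  by have [F [finF _ AF]] := Apc V (open_nbhs_nbhs (conj oV Ve)); exists F.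
exists [set A `&` mul p.2 @` p.1 | p in [set p | S p.1 /\ F p.1 p.2]].
  by apply: subspace_base_of_cofinal SN _ cofinal => V /FP[].
apply: card_le_trans (card_image_le _ _) (card_graph_finite_le infK SK _).
by move=> V /FP[].
Qed.

Lemma free_family_finite (A : set T) (S : set (set T)) (lt : set T -> set T -> Prop)
    (W : set T) :
  left_precompact mul e A -> nbhs e W -> (forall U, S U -> W `<=` U) ->
  (forall U V, S U -> S V -> U <> V -> lt U V \/ lt V U) ->
  (forall V U, S V -> S U -> lt V U -> ~ (ldiv A A `&` ldiv V V `<=` sandwich U)) ->
  finite_set S.
Proof.
move=> Apc We WS lt_total free.
have [W' W'e W'W] := nbhs_ldiv_split We.
have [F [finF _ AF]] := Apc W' W'e.
have /choice[c cP] : forall x, exists f, A x -> F f /\ exists2 w, W' w & mul f w = x.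
  move=> x; have [Ax|NAx] := pselect (A x); last by exists e.
  by have [f Ff [w W'w xE]] := AF x Ax; exists f => _; split=> //; exists w.
have near x y : A x -> A y -> c x = c y -> W (mul (inv x) y).
  move=> Ax Ay cxy; have [_ [w W'w xE]] := cP x Ax; have [_ [w' W'w' yE]] := cP y Ay.
  by rewrite -xE -yE cxy ldiv_lmul; exact: W'W.
pose P V U (xy : T * T) := [/\ A xy.1, A xy.2, ldiv V V (mul (inv xy.1) xy.2)
  & ~ sandwich U (mul (inv xy.1) xy.2)].
have witP V U : S V -> S U -> lt V U -> P V U (xget (e, e) (P V U)).
  move=> SV SU lVU; apply: xgetPex.
  have /existsNP[_ /not_implyP[[[x Ax [y Ay <-]] Vxy] Nxy]] := free V U SV SU lVU.
  by exists (x, y).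
pose col V U := (c (xget (e, e) (P V U)).1, c (xget (e, e) (P V U)).2).
apply: (@finite_of_ordered_colouring _ _ lt S (F `*` F) col) => //.
- exact: finite_setX.
- move=> V U SV SU lVU; have [Ax Ay _ _] := witP V U SV SU lVU.
  by split; [exact: (cP _ Ax).1|exact: (cP _ Ay).1].
move=> V U U' SV SU SU' lVU lUU'.
move: (witP V U SV SU lVU) (witP U U' SU SU' lUU'); rewrite /col.
case: (xget _ (P V U)) => x y; case: (xget _ (P U U')) => x' y' /=.
move=> [Ax Ay _ Nxy] [Ax' Ay' U'xy _] [cx cy]; apply: Nxy.
(* x⁻¹y = (x⁻¹x')(x'⁻¹y')(y'⁻¹y) lies in W(U⁻¹U)W. *)
exists (mul (mul (inv x) x') (mul (inv x') y')); last first.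
  exists (mul (inv y') y); first exact: WS SU _ (near _ _ Ay' Ay (esym cy)).
  by rewrite /= !ldiv_trans.
by exists (mul (inv x) x'); [exact: WS SU _ (near _ _ Ax Ax' cx)|exists (mul (inv x') y')].
Qed.

Lemma weight_le_of_infinite_calibre (K : Type) (A : set T) :
  left_precompact mul e A -> nbhd_calibre_succ_omega e K -> infinite_set [set: K] ->
  weight_le A K.
Proof.
move=> Apc calib infK; have [lt [wf_lt lt_total]] := strict_well_order_exists (set T).
pose R V U := ldiv A A `&` ldiv V V `<=` sandwich U.
have [S SE] := greedy_subset (open_nbhds_of e) R wf_lt.
have SN : S `<=` open_nbhds_of e by move=> U /SE[].
have [SK|NSK] := pselect (S #<= [set: K]).
  apply: weight_le_of_cofinal Apc infK SN SK _ => W [oW We].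
  have [U NU UW] := nbhs_sandwich (open_nbhs_nbhs (conj oW We)).
  have [SU|NSU] := pselect (S U).
    exists U => //; apply: subset_trans UW.
    by apply: subset_trans (ldiv_sub_sandwich NU.2); exact: subIsetr.
  have /existsNP[V /not_implyP[SV /not_implyP[lVU /contrapT RVU]]] :
    ~ forall V, S V -> lt V U -> ~ R V U by move=> free; apply/NSU/SE.
  by exists V => //; exact: subset_trans UW.
have [S0 S0S S0succ] := card_succ_size_sub NSK.
have [S' [S'S0 S'nat] [W [oW We] WS']] := calib S0 (subset_trans S0S SN) S0succ.
exfalso; apply: infinite_nat; rewrite -(eq_finite_set S'nat).
apply: free_family_finite Apc (open_nbhs_nbhs (conj oW We)) WS' _ _.
  by move=> U V /S'S0/S0S SU /S'S0/S0S SV; exact: lt_total.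
by move=> V U /S'S0/S0S SV /S'S0/S0S/SE[_ free]; exact: free.
Qed.

Section MinimalOpenNbhd.
Variable H : set T.
Hypothesis NH : open_nbhds_of e H.
Hypothesis Hmin : forall U, open_nbhds_of e U -> H `<=` U.

Lemma lcoset_sub_open x O : open O -> O x -> mul x @` H `<=` O.
Proof. by move=> oO Ox _ [h Hh <-]; exact: Hmin (open_nbhds_lmul_preimage oO Ox) h Hh. Qed.

Lemma minimal_nbhs_mul x y : H x -> H y -> H (mul x y).
Proof. by move=> Hx Hy; apply: lcoset_sub_open NH.1 Hx _ _; exists y. Qed.

Lemma minimal_nbhs_inv x : H x -> H (inv x).
Proof.
suff /Hmin : open_nbhds_of e (inv @^-1` H) by apply.
split; last by rewrite /= invg1; exact: NH.2.
case: G => _ _ _ _ inv_cont.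
by apply: open_comp; [move=> z _; exact: inv_cont|exact: NH.1].
Qed.

Lemma lcoset_id y : H y -> mul y @` H = H.
Proof.
move=> Hy; apply/seteqP; split=> [_ [h Hh <-]|z Hz]; first exact: minimal_nbhs_mul.
by exists (mul (inv y) z); rewrite ?mulKVg //; exact/minimal_nbhs_mul/Hz/minimal_nbhs_inv.
Qed.

Lemma lcosetI y : ~ H y -> mul y @` H `&` H = set0.
Proof.
move=> NHy; apply/seteqP; split=> // _ [[h Hh <-] Hyh]; apply: NHy.
by rewrite -[y]mulg1 -(mulgV h) mulgA; exact/minimal_nbhs_mul/minimal_nbhs_inv.
Qed.

Lemma subspace_base_lcosets A : subspace_base A [set A `&` mul y @` H | y in A].
Proof.
split=> [_ [y _ <-]|O x oO Ax Ox].
  by exists (mul y @` H) => //; apply: open_lmul_image; exact: NH.1.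
exists (A `&` mul x @` H); first by exists x.
split=> [|z [_]]; last exact: lcoset_sub_open.
by split=> //; exists e; rewrite ?mulg1 //; exact: NH.2.
Qed.

(* The coset yH is read off the open neighbourhood H ∪ yH of e. *)
Lemma card_lcosets_le A : [set A `&` mul y @` H | y in A] #<= open_nbhds_of e.
Proof.
pose lcoset_of U := if U `\` H == set0 then H else U `\` H.
apply: card_le_trans (card_image_le (fun U => A `&` lcoset_of U) _).
apply: subset_card_le => _ [y Ay <-]; exists (H `|` mul y @` H).
  split; [apply: openU; [exact: NH.1|exact: open_lmul_image NH.1]|left; exact: NH.2].
rewrite /lcoset_of setDUl setDv set0U; congr (A `&` _).
have [Hy|NHy] := pselect (H y); first by rewrite lcoset_id // setDv eqxx.
rewrite (setDidPl _ _).2 ?lcosetI //; case: eqP => // /seteqP[yH0 _].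
by have [] := yH0 y; exists e; [exact: NH.2|exact: mulg1].
Qed.

End MinimalOpenNbhd.

Lemma weight_le_of_finite_nbhds (K : Type) (A : set T) :
  finite_set (open_nbhds_of e) -> open_nbhds_of e #<= [set: K] -> weight_le A K.
Proof.
move=> finN NK; have [H NH Hmin] := minimal_open_nbhd finN.
exists [set A `&` mul y @` H | y in A]; first exact: subspace_base_lcosets.
exact: card_le_trans (card_lcosets_le NH Hmin A) NK.
Qed.

End TopologicalGroup.

Unset Implicit Arguments.

Theorem mainTheorem10 (T : topologicalType) (mul : T -> T -> T) (inv : T -> T)
    (e : T) (K : Type) (A : set T) :
  is_topological_group mul inv e ->
  left_precompact mul e A ->
  nbhd_calibre_succ_omega e K ->
  weight_le A K.
Proof.
move=> G Apc calib.
have [finK|infK] := pselect (finite_set [set: K]); last first.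
  exact: (weight_le_of_infinite_calibre G Apc calib infK).
have NK := open_nbhds_card_le calib finK.
exact: (weight_le_of_finite_nbhds G A (card_le_finite NK finK) NK).
Qed.
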